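(* Consider a Markov decision process with state space $\mathcal{S}$, action space $\mathcal{A}$, and discount factor $\gamma$. Let $s \in \mathcal{S}$ be a state, let $\pi, \hat\pi : \mathcal{S} \to \Delta(\mathcal{A})$ be policies, and let $f : \mathbb{R} \to \mathbb{R}$ be a bounded, measurable, non-negative, non-decreasing function. Suppose that $\pi(a \mid s) = f(A_{\hat\pi}(s,a))\,\hat\pi(a \mid s)$ and $\mathbb{E}_{a \sim \hat\pi(\cdot \mid s)}[f(A_{\hat\pi}(s,a))] = 1$. Then $$\mathbb{E}_{a \sim \pi(\cdot \mid s)}[Q_{\hat\pi}(s,a)] \geq V_{\hat\pi}(s).$$
   Context: $\Delta(\mathcal{A})$ denotes the set of probability distributions on $\mathcal{A}$; a policy assigns to each state a distribution over actions. For a policy $\hat\pi$, $Q_{\hat\pi}(s,a)$ is the expected discounted sum of future rewards obtained by starting in state $s$, taking action $a$, and following $\hat\pi$ thereafter; $V_{\hat\pi}(s) = \mathbb{E}_{a \sim \hat\pi(\cdot\mid s)}[Q_{\hat\pi}(s,a)]$ is the expected discounted sum of future rewards starting from $s$ and following $\hat\pi$; and $A_{\hat\pi}(s,a) = Q_{\hat\pi}(s,a) - V_{\hat\pi}(s)$ is the advantage. The equation $\pi(a\mid s) = f(A_{\hat\pi}(s,a))\hat\pi(a\mid s)$ is understood as $\pi(\cdot\mid s)$ having density $a \mapsto f(A_{\hat\pi}(s,a))$ with respect to $\hat\pi(\cdot\mid s)$. *)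

From HB Require Import structures.
From mathcomp Require Import all_boot all_order all_algebra.
From mathcomp Require Import all_classical all_reals all_analysis.
Set Implicit Arguments. Unset Strict Implicit. Unset Printing Implicit Defensive.
Import Order.TTheory GRing.Theory Num.Theory.
Import numFieldNormedType.Exports.
Local Open Scope classical_set_scope.
Local Open Scope ring_scope.

Section MDP.
Context {R : realType} {dS dA : measure_display}
  {S : measurableType dS} {A : measurableType dA}.
Variables (P : R.-pker (S * A) ~> S) (r : S * A -> R).
Variable (pihat : R.-pker S ~> A).

(* Expected reward at time n when starting in (s,a) at time 0 and following
   pihat thereafter:  E[r(s_n,a_n) | s_0 = s, a_0 = a]. *)
Fixpoint nstep_reward (n : nat) : S * A -> R :=
  match n with
  | 0 => r
  | n'.+1 => fun sa =>
      fine (\int[P sa]_s' (fine (\int[pihat s']_a' (nstep_reward n' (s', a'))%:E))%:E)%E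
  end.

Definition Qfun (gamma : R) (sa : S * A) : R :=
  limn (fun N => \sum_(0 <= n < N) (gamma ^+ n * nstep_reward n sa)).

Definition Vfun (gamma : R) (s : S) : R :=
  fine (\int[pihat s]_a (Qfun gamma (s, a))%:E)%E.

Definition Afun (gamma : R) (s : S) (a : A) : R :=
  Qfun gamma (s, a) - Vfun gamma s.

End MDP.

From HB Require Import structures.
From mathcomp Require Import all_boot all_order all_algebra.
From mathcomp Require Import all_classical all_reals all_analysis measurable_realfun.
Import Order.TTheory GRing.Theory Num.Theory.
Import numFieldNormedType.Exports.
Local Open Scope classical_set_scope.
Local Open Scope ring_scope.

(* Write q := Q(s, .) and Y := q - V(s) = A(s, .) for the advantage.  The density
   hypothesis turns E_pi[q] into E_pihat[q f(Y)] = V(s) E_pihat[f(Y)] + E_pihat[Y f(Y)]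
   = V(s) + E_pihat[Y f(Y)].  Since f is nondecreasing, Y f(Y) >= f(0) Y pointwise,
   and E_pihat[Y] = 0, so the last term is nonnegative.  The measure-theoretic
   prerequisites are that Q is measurable and bounded (a limit of discounted sums
   of iterated kernel integrals of r), and a change of variables for measures
   given by a density, obtained from the Radon-Nikodym theorem. *)

Section bounded_integrable.
Context {d : measure_display} {T : measurableType d} {R : realType}.
Variable mu : {finite_measure set T -> \bar R}.

Lemma integrable_bounded (h : T -> R) (K : R) :
  measurable_fun setT h -> (forall x, `|h x| <= K) ->
  mu.-integrable setT (EFin \o h).
Proof.
move=> mh hK; apply: measurable_bounded_integrable => //.
  exact/fin_num_fun_lty/fin_num_measure.
rewrite /bounded_near; near=> M.
move=> x _ /=; apply: le_trans (hK x) _.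
by near: M; apply: nbhs_pinfty_ge; exact: num_real.
Unshelve. all: by end_near.
Qed.

End bounded_integrable.

Section kernel_integral.
Context {d d' : measure_display} {X : measurableType d} {Y : measurableType d'}
  {R : realType}.

Lemma measurable_fun_kernel_integral (l : R.-sfker X ~> Y) (k : X * Y -> \bar R) :
  measurable_fun setT k -> measurable_fun setT (fun x => \int[l x]_y k (x, y))%E.
Proof.
move=> mk.
rewrite (_ : (fun x => _) = fun x =>
    \int[l x]_y k^\+ (x, y) - \int[l x]_y k^\- (x, y))%E; last first.
  apply/funext => x; rewrite integralE.
  by congr (_ - _)%E; apply: eq_integral => y _; rewrite ?funeposE ?funenegE.
apply: emeasurable_funB.
- apply: (@measurable_fun_integral_sfinite_kernel _ _ _ _ _ (k^\+)%E l).
    by move=> z; exact: funepos_ge0.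
  exact: measurable_funepos.
- apply: (@measurable_fun_integral_sfinite_kernel _ _ _ _ _ (k^\-)%E l).
    by move=> z; exact: funeneg_ge0.
  exact: measurable_funeneg.
Qed.

Lemma measurable_fun_kernel_Rintegral (l : R.-sfker X ~> Y) (k : X * Y -> R) :
  measurable_fun setT k ->
  measurable_fun setT (fun x => fine (\int[l x]_y (k (x, y))%:E)%E).
Proof.
move=> mk; apply: measurableT_comp; first exact: fine_measurable.
have mEk : measurable_fun setT (EFin \o k) by exact/measurable_EFinP.
exact: measurable_fun_kernel_integral l _ mEk.
Qed.

Lemma kernel_Rintegral_bounded (l : R.-pker X ~> Y) (k : X * Y -> R) (M : R) :
  measurable_fun setT k -> (forall z, `|k z| <= M) ->
  forall x, `|fine (\int[l x]_y (k (x, y))%:E)%E| <= M.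
Proof.
move=> mk kM x.
have mkx : measurable_fun setT (fun y => k (x, y)).
  exact: measurableT_comp mk (pair1_measurable x).
suff : (`|\int[l x]_y (k (x, y))%:E| <= M%:E)%E.
  by case: (\int[l x]_y _)%E => //= [t|]; rewrite lee_fin.
apply: le_trans (le_abse_integral _ _ _) _ => //; first exact/measurable_EFinP.
apply: le_trans (_ : (\int[l x]_y (cst M%:E) y <= _)%E).
  apply: ge0_le_integral => //.
  - apply/measurable_EFinP; exact: measurableT_comp.
  - by move=> y _; rewrite /= lee_fin.
by rewrite integral_cst// prob_kernel mule1.
Qed.

End kernel_integral.

Section kernel_probability.
Context {d d' : measure_display} {X : measurableType d} {Y : measurableType d'}
  {R : realType} (k : R.-pker X ~> Y).

(* [k x] is only canonically a measure; the Radon-Nikodym theory needs its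
   probability structure, which lives on this alias. *)
Definition kprobability (x : X) : set Y -> \bar R := k x.

HB.instance Definition _ x := Measure.on (kprobability x).
HB.instance Definition _ x :=
  Measure_isProbability.Build _ _ _ (kprobability x) (@prob_kernel _ _ _ _ _ k x).

End kernel_probability.

Section discounted_series.
Context {R : realType}.
Variables (gamma M : R) (v : R^nat).
Hypotheses (gamma_ge0 : 0 <= gamma) (gamma_lt1 : gamma < 1)
  (v_bounded : forall n, `|v n| <= M).

Let u n := gamma ^+ n * v n.

Let M_ge0 : 0 <= M. Proof. exact: le_trans (normr_ge0 _) (v_bounded 0). Qed.

Let normr_term_le n : `|u n| <= geometric M gamma n.
Proof.
by rewrite /u /= normrM ger0_norm ?exprn_ge0// mulrC ler_wpM2r ?exprn_ge0.
Qed.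

Lemma is_cvg_discounted_series : cvgn (series u).
Proof.
apply: normed_cvg; apply: (series_le_cvg _ _ normr_term_le).
- by move=> n; exact: normr_ge0.
- by move=> n; rewrite /= mulr_ge0 ?exprn_ge0.
- by apply: is_cvg_geometric_series; rewrite ger0_norm.
Qed.

Let normr_partial_sum_le N : `|series u N| <= M / (1 - gamma).
Proof.
apply: le_trans (ler_norm_sum _ _ _) _.
apply: le_trans (ler_sum _ (fun k _ => normr_term_le k)) _.
have := geometric_seriesE M (negbT (lt_eqF gamma_lt1)).
move=> /(congr1 (fun F => F N)); rewrite /series /= => ->.
rewrite ler_pM2r ?invr_gt0 ?subr_gt0// ler_piMr// lerBlDr lerDl exprn_ge0//.
Qed.

Lemma normr_discounted_series_le : `|limn (series u)| <= M / (1 - gamma).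
Proof.
have u_cvg := is_cvg_discounted_series.
have partial_sum_bounds N : - (M / (1 - gamma)) <= series u N <= M / (1 - gamma).
  by rewrite -ler_norml; exact: normr_partial_sum_le.
rewrite ler_norml; apply/andP; split.
  by apply: limr_ge => //; near=> N; case/andP: (partial_sum_bounds N).
by apply: limr_le => //; near=> N; case/andP: (partial_sum_bounds N).
Unshelve. all: by end_near.
Qed.

End discounted_series.

Section value_functions.
Context {R : realType} {dS dA : measure_display}
  {S : measurableType dS} {A : measurableType dA}.
Variables (P : R.-pker (S * A) ~> S) (r : S * A -> R) (pihat : R.-pker S ~> A)
  (M gamma : R).
Hypotheses (r_meas : measurable_fun setT r) (r_bounded : forall sa, `|r sa| <= M)
  (gamma_ge0 : 0 <= gamma) (gamma_lt1 : gamma < 1).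

Lemma nstep_reward_measurable_bounded n :
  measurable_fun setT (nstep_reward P r pihat n) /\
  forall sa, `|nstep_reward P r pihat n sa| <= M.
Proof.
elim: n => [|n [mn bn]]; first by [].
pose g x := fine (\int[pihat x]_a (nstep_reward P r pihat n (x, a))%:E)%E.
have mg : measurable_fun setT g := measurable_fun_kernel_Rintegral pihat _ mn.
have mg2 : measurable_fun [set: (S * A) * S] (fun z => g z.2).
  exact: measurableT_comp mg measurable_snd.
split; first exact: measurable_fun_kernel_Rintegral P _ mg2.
apply: kernel_Rintegral_bounded P _ _ mg2 _ => z.
exact: kernel_Rintegral_bounded pihat _ _ mn bn z.2.
Qed.

Let nstep_reward_bounded sa n : `|nstep_reward P r pihat n sa| <= M.
Proof. exact: (nstep_reward_measurable_bounded n).2. Qed.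

Lemma measurable_Qfun : measurable_fun setT (Qfun P r pihat gamma).
Proof.
apply: (measurable_fun_cvg (h := fun N sa =>
  series (fun n => gamma ^+ n * nstep_reward P r pihat n sa) N)).
  move=> N; apply: measurable_sum => n; apply: measurable_funM => //.
  exact: (nstep_reward_measurable_bounded n).1.
move=> sa _; exact: is_cvg_discounted_series gamma_ge0 gamma_lt1 (nstep_reward_bounded sa).
Qed.

Lemma Qfun_bounded sa : `|Qfun P r pihat gamma sa| <= M / (1 - gamma).
Proof. exact: normr_discounted_series_le gamma_ge0 gamma_lt1 (nstep_reward_bounded sa). Qed.

End value_functions.

Section integral_density.
Local Open Scope ereal_scope.
Local Open Scope charge_scope.
Context {d : measure_display} {T : measurableType d} {R : realType}.
Variables (mu : {sigma_finite_measure set T -> \bar R})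
  (nu : {finite_measure set T -> \bar R}) (g : T -> R).
Hypotheses (ig : mu.-integrable setT (EFin \o g))
  (nu_density : forall E, measurable E -> nu E = \int[mu]_(x in E) (g x)%:E).

Lemma dominates_density : charge_of_finite_measure nu `<< mu.
Proof.
apply/null_content_dominatesP => E mE muE0.
rewrite /charge_of_finite_measure /= nu_density// null_set_integral//.
apply: (measurable_funS measurableT) => //; exact: measurable_int _ ig.
Qed.

Lemma ae_eq_Radon_Nikodym_density :
  ae_eq mu setT (EFin \o g) ('d (charge_of_finite_measure nu) '/d mu).
Proof.
have numu := dominates_density.
apply: integral_ae_eq => //.
by move=> E _ mE; rewrite -Radon_Nikodym_integral//; exact/esym/nu_density.
Qed.

Lemma integral_density (h : T -> \bar R) : nu.-integrable setT h ->
  \int[mu]_x (h x * (g x)%:E) = \int[nu]_x h x.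
Proof.
have numu := dominates_density.
move=> ih; rewrite -(Radon_Nikodym_change_of_variables numu)//.
apply: ae_eq_integral => //.
- apply: emeasurable_funM; first exact: measurable_int _ ih.
  exact: measurable_int _ ig.
- by apply: emeasurable_funM; first exact: measurable_int _ ih.
- exact: ae_eqe_mul2l ae_eq_Radon_Nikodym_density.
Qed.
End integral_density.

Section reweighted_mean.
Local Open Scope ereal_scope.
Context {d : measure_display} {T : measurableType d} {R : realType}.

Lemma integral_mul_nondecreasing_ge (mu : {measure set T -> \bar R})
    (f : R -> R) (Y : T -> R) : {homo f : x y / (x <= y)%R} ->
  mu.-integrable setT (EFin \o Y) ->
  mu.-integrable setT (fun t => (Y t * f (Y t))%:E) ->
  (f 0)%:E * \int[mu]_t (Y t)%:E <= \int[mu]_t (Y t * f (Y t))%:E.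
Proof.
move=> f_nd iY iYf; rewrite -integralZl//.
apply: le_integral => //; first exact: integrableZl.
move=> t _; rewrite -EFinM lee_fin -subr_ge0 [(f 0 * _)%R]mulrC -mulrBr.
have [Y_ge0|Y_lt0] := leP 0%R (Y t).
  by rewrite mulr_ge0// subr_ge0 f_nd.
by rewrite nmulr_rge0// subr_le0 f_nd// ltW.
Qed.

Variables (mu : probability T R) (X : T -> R) (f : R -> R).
Let c := fine (\int[mu]_t (X t)%:E).
Let phi t := f (X t - c).
Hypotheses (f_nd : {homo f : x y / (x <= y)%R})
  (iX : mu.-integrable setT (EFin \o X))
  (iphi : mu.-integrable setT (EFin \o phi))
  (iXphi : mu.-integrable setT (fun t => (X t * phi t)%:E))
  (phi_normalized : \int[mu]_t (phi t)%:E = 1).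

Lemma mean_le_integral_reweighted : c%:E <= \int[mu]_t (X t * phi t)%:E.
Proof.
have iY : mu.-integrable setT (fun t => (X t - c)%:E).
  rewrite (_ : (fun t => _) = (EFin \o X) \- cst c%:E); last first.
    by apply/funext => t; rewrite /= EFinB.
  by apply: integrableB => //; exact: (finite_measure_integrable_cst _ c).
have iYphi : mu.-integrable setT (fun t => ((X t - c) * phi t)%:E).
  rewrite (_ : (fun t => _) =
      (fun t => (X t * phi t)%:E) \- (fun t => c%:E * (phi t)%:E)); last first.
    by apply/funext => t; rewrite /= -EFinD mulrBl.
  by apply: integrableB => //; exact: integrableZl.
have intX : \int[mu]_t (X t)%:E = c%:E.
  by rewrite /c fineK// integrable_fin_num.
have intY : \int[mu]_t (X t - c)%:E = 0.
  rewrite (_ : (fun t => _) = (EFin \o X) \- cst c%:E); last first.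
    by apply/funext => t; rewrite /= EFinB.
  rewrite integralB//; last exact: (finite_measure_integrable_cst _ c).
  by rewrite intX integral_cst//= probability_setT mule1 subee.
have intXphi : \int[mu]_t (X t * phi t)%:E =
    \int[mu]_t ((X t - c) * phi t)%:E + c%:E.
  rewrite -[X in _ + X]mule1 -phi_normalized -integralZl// -integralD//.
    by apply: eq_integral => t _; rewrite -EFinM -EFinD mulrBl subrK.
  exact: integrableZl.
rewrite intXphi leeDr//.
have := integral_mul_nondecreasing_ge mu f (fun t => X t - c)%R f_nd iY iYphi.
by rewrite intY mule0.
Qed.

End reweighted_mean.

Theorem lemmaA2 (R : realType) (dS dA : measure_display)
  (S : measurableType dS) (A : measurableType dA)
  (P : R.-pker (S * A) ~> S) (r : S * A -> R) (gamma : R)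
  (hr_meas : measurable_fun setT r)
  (hr_bdd : exists M : R, forall sa, `|r sa| <= M)
  (hgamma0 : 0 <= gamma) (hgamma1 : gamma < 1)
  (s : S) (pi pihat : R.-pker S ~> A) (f : R -> R)
  (hf_bdd : exists M : R, forall x, `|f x| <= M)
  (hf_meas : measurable_fun setT f)
  (hf_ge0 : forall x, 0 <= f x)
  (hf_nd : {homo f : x y / x <= y})
  (hdens : forall U : set A, measurable U ->
     pi s U = (\int[pihat s]_(a in U) (f (Afun P r pihat gamma s a))%:E)%E)
  (hnorm : (\int[pihat s]_a (f (Afun P r pihat gamma s a))%:E)%E = 1%E) :
  ((Vfun P r pihat gamma s)%:E <= \int[pi s]_a (Qfun P r pihat gamma (s, a))%:E)%E.
Proof.
have [Mr r_bounded] := hr_bdd; have [Mf f_bounded] := hf_bdd.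
pose q a := Qfun P r pihat gamma (s, a).
pose phi a := f (Afun P r pihat gamma s a).
have mq : measurable_fun setT q.
  apply: measurableT_comp (pair1_measurable s).
  exact: measurable_Qfun P r pihat _ gamma hr_meas r_bounded hgamma0 hgamma1.
have q_bounded a : `|q a| <= Mr / (1 - gamma).
  exact: Qfun_bounded P r pihat _ gamma hr_meas r_bounded hgamma0 hgamma1 (s, a).
have mphi : measurable_fun setT phi.
  by apply: measurableT_comp hf_meas _; exact: measurable_funB.
have phi_bounded a : `|phi a| <= Mf := f_bounded _.
have qphi_bounded a : `|q a * phi a| <= Mr / (1 - gamma) * Mf.
  by rewrite normrM; apply: ler_pM.
have iq (nu : {finite_measure set A -> \bar R}) : nu.-integrable setT (EFin \o q) := integrable_bounded nu _ _ mq q_bounded.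
have iphi (nu : {finite_measure set A -> \bar R}) : nu.-integrable setT (EFin \o phi) :=
  integrable_bounded nu _ _ mphi phi_bounded.
have iqphi (nu : {finite_measure set A -> \bar R}) : nu.-integrable setT (EFin \o (q \* phi)).
  by apply: integrable_bounded qphi_bounded; exact: measurable_funM.
rewrite -(integral_density (kprobability pihat s) (kprobability pi s) _
  (iphi _) hdens _ (iq _)).
under eq_integral do rewrite -EFinM.
exact: mean_le_integral_reweighted (kprobability pihat s) q f hf_nd
  (iq _) (iphi _) (iqphi _) hnorm.
Qed.
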